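(* Let $(S,\curlyvee)$ be a $\curlyvee$-algebra. A non-empty subset $I\subseteq S$ is a $\lesssim$-ideal if and only if it is a down-set under $\lesssim$ such that $i\curlyvee j\in I$ whenever $i,j\in I$.
   Context: A $\curlyvee$-algebra is an algebra $(S,\curlyvee)$ with one binary operation such that, defining $a\sqcup b=a\curlyvee(a\curlyvee b)$ and $a\lesssim b$ iff $b\sqcup a=b$: $\sqcup$ is associative, $a\sqcup a=a$ and $a\sqcup b=(a\sqcup b)\sqcup a$; $\curlyvee$ is commutative and idempotent; $(a\curlyvee b)\sqcup(a\sqcup b)=a\sqcup b$; $a\sqcup(b\curlyvee c)=(a\sqcup b)\curlyvee(a\sqcup c)$; and if $d\lesssim a,b,c,a\curlyvee b,b\curlyvee c$ then $d\lesssim a\curlyvee c$. A $\lesssim$-ideal of $S$ is a non-empty subset $I$ that is a down-set under $\lesssim$ and satisfies $i\sqcup j\in I$ for all $i,j\in I$. *)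

Section VeeAlg.
Context {S : Type} (vee : S -> S -> S).

Definition sqcup (a b : S) : S := vee a (vee a b).

Definition lesssim (a b : S) : Prop := sqcup b a = b.

Record is_vee_algebra : Prop := {
  sqcup_assoc : forall a b c, sqcup a (sqcup b c) = sqcup (sqcup a b) c;
  sqcup_idem : forall a, sqcup a a = a;
  sqcup_regular : forall a b, sqcup a b = sqcup (sqcup a b) a;
  vee_comm : forall a b, vee a b = vee b a;
  vee_idem : forall a, vee a a = a;
  vee_sqcup_absorb : forall a b, sqcup (vee a b) (sqcup a b) = sqcup a b;
  sqcup_distr_vee : forall a b c, sqcup a (vee b c) = vee (sqcup a b) (sqcup a c);
  lesssim_vee_cond : forall a b c d,
    lesssim d a -> lesssim d b -> lesssim d c ->
    lesssim d (vee a b) -> lesssim d (vee b c) -> lesssim d (vee a c)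
}.

Definition down_set (I : S -> Prop) : Prop :=
  forall x y, I y -> lesssim x y -> I x.

Definition lesssim_ideal (I : S -> Prop) : Prop :=
  (exists x, I x) /\ down_set I /\ (forall i j, I i -> I j -> I (sqcup i j)).

End VeeAlg.


(* An ideal closed under [sqcup] is closed under [vee] because [vee i j] lies
   below [sqcup i j]; conversely [sqcup i j = vee i (vee i j)] is built from
   two [vee]-steps. *)

Section VeeAlgebra.

Context {S : Type} {vee : S -> S -> S}.
Hypothesis HS : is_vee_algebra vee.

Lemma sqcup_absorb_r (a b : S) : sqcup vee (sqcup vee a b) b = sqcup vee a b.
Proof. now rewrite <- (sqcup_assoc _ HS), (sqcup_idem _ HS). Qed.

Lemma vee_lesssim_sqcup (a b : S) : lesssim vee (vee a b) (sqcup vee a b).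
Proof.
  unfold lesssim.
  rewrite (sqcup_distr_vee _ HS), <- (sqcup_regular _ HS), sqcup_absorb_r.
  apply (vee_idem _ HS).
Qed.

Lemma vee_closed_of_sqcup_closed {I : S -> Prop} :
  down_set vee I -> (forall i j, I i -> I j -> I (sqcup vee i j)) ->
  forall i j, I i -> I j -> I (vee i j).
Proof.
  intros Hdown Hsqcup i j Hi Hj.
  apply (Hdown _ (sqcup vee i j)); [now apply Hsqcup | apply vee_lesssim_sqcup].
Qed.

End VeeAlgebra.

Lemma sqcup_closed_of_vee_closed {S : Type} {vee : S -> S -> S} {I : S -> Prop} :
  (forall i j, I i -> I j -> I (vee i j)) ->
  forall i j, I i -> I j -> I (sqcup vee i j).
Proof. intros Hvee i j Hi Hj. now apply Hvee; [| apply Hvee]. Qed.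

Theorem proposition4p5 (S : Type) (vee : S -> S -> S)
  (HS : is_vee_algebra vee) (I : S -> Prop) (Hne : exists x, I x) :
  lesssim_ideal vee I <->
  (down_set vee I /\ (forall i j, I i -> I j -> I (vee i j))).
Proof.
  split.
  - intros [_ [Hdown Hsqcup]].
    split; [exact Hdown | exact (vee_closed_of_sqcup_closed HS Hdown Hsqcup)].
  - intros [Hdown Hvee].
    exact (conj Hne (conj Hdown (sqcup_closed_of_vee_closed Hvee))).
Qed.
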